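(* Let $M,N$ be sharp, integral monoids, $\Gamma$ an $M$-metrised graph, $f:M\to N$ a monoid homomorphism, and $\Gamma'$ the edge contraction of $\Gamma$ along $f$. Then $\operatorname{dgon}(\Gamma')\le\operatorname{dgon}(\Gamma)$.
   Context: Monoids are commutative, sharp (only unit $0$), integral (cancellative), with groupification; $\langle m\rangle=\{km:k\in\mathbb Z\}$ and for $x=km$, $m\ne0$, $x/m:=k$. A graph is $(X,r,i)$, $X$ finite, $r$ idempotent, $i$ an involution, $i(x)=x\iff r(x)=x$; vertices $V$ = fixed points, half-edges $H=X\setminus V$, edges $\{e,i(e)\}$ joining $r(e),r(i(e))$, $H_v=\{e\in H:r(e)=v\}$; graphs are connected. An $M$-metrised graph adds $l:X\to M$ with $l(i(x))=l(x)$, $l(x)=0\iff x\in V$. Divisors: free abelian group on $V$, pointwise order; $\operatorname{Div}^k_+$ = effective divisors of degree $k$. $\operatorname{PL}(\Gamma)=\{g:V\to M^{gp}: g(r(e))-g(r(i(e)))\in\langle l(e)\rangle\ \forall e\in H\}$; $\Delta(g)=\sum_{v}\big(\sum_{e\in H_v}\frac{g(v)-g(r(i(e)))}{l(e)}\big)[v]$; $D\sim D'$ iff $D-D'\in\Delta(\operatorname{PL}(\Gamma))$; $|D|=\{E\ge0:E\sim D\}$; $r(D)=\max\{k\in\mathbb Z:|D-F|\ne\emptyset\ \forall F\in\operatorname{Div}^k_+(\Gamma)\}$; $\operatorname{dgon}(\Gamma)=\min\{\deg D: r(D)\ge1\}$. The edge contraction of $\Gamma$ along $f$ is the $N$-metrised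 graph obtained as the quotient of $X$ by the equivalence relation generated by $e\sim r(e)\sim i(e)\sim r(i(e))$ for every $e\in H$ with $f(l(e))=0$, with induced $r,i$ and length $f\circ l$. *)

From HB Require Import structures.
From mathcomp Require Import all_boot all_order all_algebra.
From Stdlib Require Import ClassicalEpsilon.
Set Implicit Arguments. Unset Strict Implicit. Unset Printing Implicit Defensive.
Import Order.TTheory GRing.Theory Num.Theory.
Local Open Scope ring_scope.

(* ---------- Monoids ----------
   A commutative, sharp, integral monoid with groupification is represented as
   a submonoid M of an abelian group G (its groupification), M generating G. *)
Definition sharp_integral_monoid (G : zmodType) (M : G -> Prop) : Prop :=
  [/\ M 0,
      (forall a b, M a -> M b -> M (a + b)),
      (forall a, M a -> M (- a) -> a = 0)
    & (forall x : G, exists a b, [/\ M a, M b & x = a - b])].  (* G = M^gp *)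

(* monoid homomorphism f : M -> N (f is only relevant on M) *)
Definition monoid_hom (G H : zmodType) (M : G -> Prop) (N : H -> Prop)
    (f : G -> H) : Prop :=
  [/\ f 0 = 0,
      (forall a b, M a -> M b -> f (a + b) = f a + f b)
    & (forall a, M a -> N (f a))].

(* x / m := the k with x = k m  (well defined for sharp integral monoids, m <> 0) *)
Definition mquot (G : zmodType) (x m : G) : int :=
  epsilon (inhabits 0%R) (fun k : int => x = m *~ k).

Section Graph.
Variables (X : finType) (r i : X -> X).

Definition is_vertex (x : X) : bool := r x == x.

Definition adj : rel X :=
  [rel x y | (y == r x) || (y == i x) || (x == r y) || (x == i y)].

Definition graph_connected : Prop :=
  (exists x : X, True) /\ (forall x y, connect adj x y).

Definition is_graph : Prop :=
  [/\ (forall x, r (r x) = r x),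
      (forall x, i (i x) = x),
      (forall x, i x = x <-> r x = x)
    & graph_connected].

Definition is_metrised_graph (G : zmodType) (M : G -> Prop) (l : X -> G) : Prop :=
  [/\ is_graph,
      (forall x, M (l x)),
      (forall x, l (i x) = l x)
    & (forall x, l x = 0 <-> r x = x)].

Definition is_divisor (D : X -> int) : Prop := forall x, r x != x -> D x = 0.
Definition deg (D : X -> int) : int := \sum_(x : X) D x.
Definition effective (D : X -> int) : Prop := forall x, 0 <= D x.

Variables (G : zmodType) (l : X -> G).

(* piecewise linear functions (only the values on vertices matter) *)
Definition is_PL (g : X -> G) : Prop :=
  forall e, r e != e -> exists k : int, g (r e) - g (r (i e)) = l e *~ k.

Definition laplacian (g : X -> G) : X -> int := fun v =>
  if r v == v then
    \sum_(e : X | (r e != e) && (r e == v)) mquot (g v - g (r (i e))) (l e)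
  else 0.

Definition lin_equiv (D D' : X -> int) : Prop :=
  exists g, is_PL g /\ forall x, D x - D' x = laplacian g x.

Definition linsys_nonempty (D : X -> int) : Prop :=
  exists E, [/\ is_divisor E, effective E & lin_equiv E D].

Definition rank_set (D : X -> int) (k : int) : Prop :=
  forall F, is_divisor F -> effective F -> deg F = k ->
    linsys_nonempty (fun x => D x - F x).

Definition is_rank (D : X -> int) (n : int) : Prop :=
  rank_set D n /\ forall k, rank_set D k -> k <= n.

Definition rank_ge1 (D : X -> int) : Prop :=
  exists n, is_rank D n /\ 1 <= n.

Definition is_dgon (n : int) : Prop :=
  (exists D, [/\ is_divisor D, rank_ge1 D & deg D = n]) /\
  (forall D, is_divisor D -> rank_ge1 D -> n <= deg D).

End Graph.

Definition contr_rel (X : finType) (r i : X -> X) (G H : zmodType)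
    (l : X -> G) (f : G -> H) : rel X :=
  [rel x y | [exists e : X, [&& r e != e, f (l e) == 0,
                 x \in [:: e; r e; i e; r (i e)] &
                 y \in [:: e; r e; i e; r (i e)]]]].

Definition is_edge_contraction (X : finType) (r i : X -> X) (G H : zmodType)
    (l : X -> G) (f : G -> H)
    (X' : finType) (r' i' : X' -> X') (l' : X' -> H) (q : X -> X') : Prop :=
  [/\ (forall y : X', exists x, q x = y),
      (forall x y, q x = q y <-> connect (contr_rel r i l f) x y),
      (forall x, r' (q x) = q (r x)),
      (forall x, i' (q x) = q (i x))
    & (forall x, l' (q x) = f (l x))].

(* Push divisors forward along the quotient map q (summing over fibres) and
   piecewise linear functions forward through the additive extension of f to the
   groupification; the latter is constant on contracted components because a contracted
   edge has length in the kernel of f. Push-forward commutes with the Laplacian: the slopes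
   along contracted half-edges cancel in pairs (e against i e), and the remaining half-edges
   correspond bijectively to the half-edges of the contraction, with the same slopes.
   Hence push-forward preserves degree and linear equivalence, and since every effective
   divisor of the contraction lifts to one of the same degree, it does not decrease ranks.
   A divisor realising dgon of the original graph thus pushes forward to a divisor of the
   same degree and rank at least 1. *)

From HB Require Import structures.
From mathcomp Require Import all_boot all_order all_algebra.
From mathcomp Require Import zify.
From Stdlib Require Import ClassicalEpsilon Classical.
Set Implicit Arguments. Unset Strict Implicit. Unset Printing Implicit Defensive.
Import Order.TTheory GRing.Theory Num.Theory.
Local Open Scope ring_scope.

Lemma int_max_exists (P : int -> Prop) (a b : int) :
  P a -> (forall k, P k -> k <= b) -> exists n, P n /\ forall k, P k -> k <= n.
Proof.
move=> Pa Pb.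
suff max_above : forall (m : nat) a, P a -> (forall k, P k -> k <= a + m%:Z) ->
    exists n, P n /\ forall k, P k -> k <= n.
  have ab : a <= b by apply: Pb.
  by apply: (max_above `|b - a|%N a Pa) => k /Pb; lia.
elim=> [|m IHm] a0 Pa0 le_a0m.
  by exists a0; split => // k /le_a0m; rewrite addr0.
have [[k [Pk lt_k]] | no_above] := classic (exists k, P k /\ a0 + m%:Z < k).
  by exists k; split => // k' /le_a0m; lia.
apply: (IHm a0 Pa0) => k Pk; rewrite leNgt; apply/negP => lt_k.
by apply: no_above; exists k.
Qed.

Lemma int_min_exists (P : int -> Prop) (a b : int) :
  P a -> (forall k, P k -> b <= k) -> exists n, P n /\ forall k, P k -> n <= k.
Proof.
move=> Pa Pb.
have [||n [Pn max_n]] := @int_max_exists (fun k => P (- k)) (- a) (- b).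
- by rewrite opprK.
- by move=> k /Pb; lia.
by exists (- n); split => // k Pk; have := max_n (- k); rewrite opprK => /(_ Pk); lia.
Qed.

Lemma sum_involution_anti (T : finType) (i : T -> T) (P : pred T) (h : T -> int) :
  involutive i -> (forall e, P e -> P (i e)) -> (forall e, P e -> h (i e) = - h e) ->
  \sum_(e | P e) h e = 0.
Proof.
move=> iK Pi h_anti; set S := \sum_(e | P e) h e.
suff S_opp : S = - S by move: S_opp; lia.
rewrite /S -sumrN [LHS](reindex_inj (inv_inj iK)) /=.
rewrite [LHS](eq_bigl P) => [|e]; first by apply: eq_bigr => e /h_anti.
by apply/idP/idP => [/Pi|/Pi//]; rewrite iK.
Qed.

Definition torsion_free (G : zmodType) (m : G) := forall k : int, m *~ k = 0 -> k = 0.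

Lemma mquot_mulrz (G : zmodType) (m : G) (k : int) :
  torsion_free m -> mquot (m *~ k) m = k.
Proof.
move=> m_tf; rewrite /mquot.
have := epsilon_spec (inhabits 0%R) (fun j : int => m *~ k = m *~ j) (ex_intro _ k erefl).
move=> /eqP; rewrite -subr_eq0 -mulrzBr => /eqP/m_tf/eqP.
by rewrite subr_eq0 => /eqP.
Qed.

Lemma sharp_torsion_free (G : zmodType) (M : G -> Prop) (a : G) :
  sharp_integral_monoid M -> M a -> a != 0 -> torsion_free a.
Proof.
case=> M0 MD M_sharp _ Ma a_neq0.
have M_mulrn n : M (a *+ n) by elim: n => [|n IHn]; rewrite ?mulr0n // mulrS; apply: MD.
have mulrSn_neq0 n : a *+ n.+1 != 0.
  apply/eqP; rewrite mulrSr => /eqP; rewrite addr_eq0 => /eqP a_opp.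
  have M_opp : M (- a) by rewrite -a_opp.
  by move/eqP: (M_sharp _ Ma M_opp); rewrite (negbTE a_neq0).
case=> [[|n]|n] //= => [/eqP|]; first by rewrite (negbTE (mulrSn_neq0 n)).
by rewrite NegzE mulrNz => /eqP; rewrite oppr_eq0 (negbTE (mulrSn_neq0 n)).
Qed.

Section GroupExtension.
Variables (G H : zmodType) (M : G -> Prop) (N : H -> Prop) (f : G -> H).
Hypotheses (hM : sharp_integral_monoid M) (hf : monoid_hom M N f).

(* The extension of [f] to the groupification: [a - b] with [a, b] in [M] goes to
   [f a - f b], which does not depend on the chosen decomposition. *)
Definition gp_ext (x : G) : H :=
  let p := epsilon (inhabits (0 : G, 0 : G))
     (fun p : G * G => [/\ M p.1, M p.2 & x = p.1 - p.2]) in f p.1 - f p.2.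

Lemma gp_ext_subr a b : M a -> M b -> gp_ext (a - b) = f a - f b.
Proof.
move=> Ma Mb; rewrite /gp_ext.
have ab_ex : exists p : G * G, [/\ M p.1, M p.2 & a - b = p.1 - p.2] by exists (a, b).
case: (epsilon _ _) (epsilon_spec (inhabits (0 : G, 0 : G)) _ ab_ex) => a' b' /=.
case=> Ma' Mb' ab_eq; case: hf => _ fD _.
have cross : a + b' = a' + b by apply/eqP; rewrite -subr_eq addrAC ab_eq subrK.
have f_cross : f a + f b' = f a' + f b by rewrite -!fD // cross.
by apply/eqP; rewrite subr_eq addrAC f_cross addrK.
Qed.

Lemma gp_extE a : M a -> gp_ext a = f a.
Proof.
case: hM => M0 _ _ _; case: hf => f0 _ _ Ma.
by rewrite -[a in gp_ext a]subr0 gp_ext_subr // f0 subr0.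
Qed.

Lemma gp_ext_is_zmod_morphism : zmod_morphism gp_ext.
Proof.
case: hM => _ MD _ M_gen; case: hf => _ fD _ x y.
have [a [b [Ma Mb ->]]] := M_gen x; have [c [d [Mc Md ->]]] := M_gen y.
have -> : a - b - (c - d) = (a + d) - (b + c) by rewrite opprB opprD addrACA.
rewrite !gp_ext_subr ?fD //; try exact: MD.
by rewrite opprB opprD addrACA.
Qed.

HB.instance Definition _ := GRing.isZmodMorphism.Build G H gp_ext gp_ext_is_zmod_morphism.

Lemma gp_extB : {morph gp_ext : x y / x - y}.
Proof. exact: raddfB. Qed.

Lemma gp_ext_mulrz a k : M a -> gp_ext (a *~ k) = f a *~ k.
Proof. by move=> Ma; rewrite raddfMz; congr (_ *~ _); apply: gp_extE. Qed.

End GroupExtension.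

Section Laplacian.
Variables (X : finType) (r i : X -> X) (G : zmodType) (l : X -> G).
Hypotheses (r_idem : forall x, r (r x) = r x) (iK : involutive i).
Hypothesis half_edge_i : forall e, (r (i e) != i e) = (r e != e).
Hypothesis l_i : forall e, l (i e) = l e.
Hypothesis l_torsion_free : forall e, r e != e -> torsion_free (l e).

Definition slope (g : X -> G) (e : X) : int := mquot (g (r e) - g (r (i e))) (l e).

Lemma slopeP g e : is_PL r i l g -> r e != e -> g (r e) - g (r (i e)) = l e *~ slope g e.
Proof.
move=> g_PL e_half; have [k gk] := g_PL e e_half.
by rewrite /slope gk mquot_mulrz //; apply: l_torsion_free.
Qed.

Lemma slope_i g e : is_PL r i l g -> r e != e -> slope g (i e) = - slope g e.
Proof.
move=> g_PL e_half; have [k gk] := g_PL e e_half.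
rewrite /slope iK l_i -opprB gk -mulrNz !mquot_mulrz //; exact: l_torsion_free.
Qed.

Lemma sum_laplacian g : \sum_x laplacian r i l g x = \sum_(e | r e != e) slope g e.
Proof.
rewrite [RHS](partition_big r (fun v => r v == v)) => [|e _]; last by rewrite r_idem.
rewrite [LHS](bigID (fun v => r v == v)) /= [X in _ + X]big1 ?addr0 => [|v]; last first.
  by rewrite /laplacian => /negbTE ->.
apply: eq_bigr => v v_vert; rewrite /laplacian v_vert.
by apply: eq_bigr => e /andP[_ /eqP <-].
Qed.

Lemma sum_laplacian_PL g : is_PL r i l g -> \sum_x laplacian r i l g x = 0.
Proof.
move=> g_PL; rewrite sum_laplacian; apply: sum_involution_anti iK _ _ => e.
  by rewrite half_edge_i.
exact: slope_i.
Qed.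

Lemma deg_lin_equiv D D' : lin_equiv r i l D D' -> deg D = deg D'.
Proof.
case=> g [g_PL DD']; apply/eqP; rewrite -subr_eq0 /deg -sumrB.
by rewrite (eq_bigr _ (fun x _ => DD' x)) sum_laplacian_PL.
Qed.

Variable v0 : X.
Hypothesis v0_vertex : r v0 = v0.

Lemma rank_set_le_deg D k : rank_set r i l D k -> 0 <= k -> k <= deg D.
Proof.
move=> D_rank k_ge0; pose F x : int := if x == v0 then k else 0.
have deg_F : deg F = k by rewrite /deg /F -big_mkcond big_pred1_eq.
have [|||E [_ E_eff /deg_lin_equiv]] := D_rank F; rewrite ?deg_F //.
- by move=> x; rewrite /F; case: (x =P v0) => [->|//]; rewrite v0_vertex eqxx.
- by move=> x; rewrite /F; case: eqP.
rewrite /deg sumrB -/(deg D) -/(deg F) deg_F => deg_E.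
by rewrite -subr_ge0 -deg_E; apply: sumr_ge0 => x _; apply: E_eff.
Qed.

Lemma rank_ge1_of_rank_set D k : rank_set r i l D k -> 1 <= k -> rank_ge1 r i l D.
Proof.
move=> D_rank k_ge1.
have [|n [n_rank n_max]] := int_max_exists D_rank (b := `|deg D|) => [j j_rank|].
  have [j_ge0|/ltW j_le0] := lerP 0 j; last exact: le_trans j_le0 (normr_ge0 _).
  exact: le_trans (rank_set_le_deg j_rank j_ge0) (ler_norm _).
by exists n; split; [split | apply: le_trans k_ge1 (n_max k D_rank)].
Qed.

Lemma is_dgon_le D : is_divisor r D -> rank_ge1 r i l D ->
  exists n, is_dgon r i l n /\ n <= deg D.
Proof.
move=> D_div D_rank.
pose P k := exists D', [/\ is_divisor r D', rank_ge1 r i l D' & deg D' = k].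
have [||n [n_P n_min]] := @int_min_exists P (deg D) 1.
- by exists D.
- move=> _ [D' [_ [j [[j_rank _] j_ge1]] <-]].
  exact: le_trans j_ge1 (rank_set_le_deg j_rank (le_trans ler01 j_ge1)).
exists n; split; last by apply: n_min; exists D.
by split=> // D' D'_div D'_rank; apply: n_min; exists D'.
Qed.

End Laplacian.

Section MetrisedGraph.
Variables (G : zmodType) (M : G -> Prop) (X : finType) (r i : X -> X) (l : X -> G).
Hypothesis hGamma : is_metrised_graph r i M l.

Lemma metrised_r_idem x : r (r x) = r x.
Proof. by case: hGamma => [[]]. Qed.

Lemma metrised_iK : involutive i.
Proof. by case: hGamma => [[]]. Qed.

Lemma metrised_l_i e : l (i e) = l e.
Proof. by case: hGamma. Qed.

Lemma metrised_half_edge_i e : (r (i e) != i e) = (r e != e).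
Proof.
case: hGamma => [[_ iK i_fix _] _ _ _]; congr negb; apply/eqP/eqP.
  by move/i_fix; rewrite iK => e_fix; apply/i_fix; rewrite e_fix iK.
by move/i_fix => e_fix; apply/i_fix; rewrite iK e_fix.
Qed.

Lemma metrised_l_torsion_free :
  sharp_integral_monoid M -> forall e, r e != e -> torsion_free (l e).
Proof.
case: hGamma => _ Ml _ l_eq0 hM e e_half; apply: sharp_torsion_free hM (Ml e) _.
by apply: contra e_half => /eqP /l_eq0 ->.
Qed.

Lemma metrised_vertex_exists : exists v, r v = v.
Proof. by case: hGamma => [[r_idem _ _ [[x _] _]] _ _ _]; exists (r x). Qed.

End MetrisedGraph.

Section Contraction.
Variables (G H : zmodType) (M : G -> Prop) (N : H -> Prop).
Hypotheses (hM : sharp_integral_monoid M) (hN : sharp_integral_monoid N).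
Variables (X : finType) (r i : X -> X) (l : X -> G) (f : G -> H).
Hypotheses (hGamma : is_metrised_graph r i M l) (hf : monoid_hom M N f).
Variables (X' : finType) (r' i' : X' -> X') (l' : X' -> H) (q : X -> X').
Hypothesis hcontr : is_edge_contraction r i l f r' i' l' q.

Local Notation contracted := (contr_rel r i l f).
Local Notation gp_f := (gp_ext M f).
Let r_idem := metrised_r_idem hGamma.
Let iK := metrised_iK hGamma.
Let l_i := metrised_l_i hGamma.
Let half_edge_i := metrised_half_edge_i hGamma.
Let l_torsion_free := metrised_l_torsion_free hGamma hM.

Lemma contr_surj y : exists x, q x = y.
Proof. by case: hcontr. Qed.

Lemma contr_eq x y : q x = q y <-> connect contracted x y.
Proof. by case: hcontr. Qed.

Lemma contr_r x : r' (q x) = q (r x).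
Proof. by case: hcontr. Qed.

Lemma contr_i x : i' (q x) = q (i x).
Proof. by case: hcontr. Qed.

Lemma contr_l x : l' (q x) = f (l x).
Proof. by case: hcontr. Qed.

Lemma q_contracted_edge e u v : r e != e -> f (l e) = 0 ->
  u \in [:: e; r e; i e; r (i e)] -> v \in [:: e; r e; i e; r (i e)] -> q u = q v.
Proof.
move=> e_half fe0 u_e v_e; apply/contr_eq/connect1/existsP.
by exists e; rewrite e_half fe0 eqxx u_e v_e.
Qed.

Lemma connect_contracted_uncontracted e y : r e != e -> f (l e) != 0 ->
  connect contracted e y -> y = e.
Proof.
move=> e_half fe_neq0 /connectP [[|z p] //= /andP [/existsP [e0] + _] _].
case/and4P=> _ /eqP fe00 + _; rewrite !inE.
by case/or4P=> /eqP e_eq; move: e_half fe_neq0; rewrite e_eq ?l_i ?r_idem ?fe00 ?eqxx.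
Qed.

Lemma q_half_edge e : r e != e -> f (l e) != 0 -> r' (q e) != q e.
Proof.
move=> e_half fe_neq0; rewrite contr_r.
apply/eqP => /esym /contr_eq /(connect_contracted_uncontracted e_half fe_neq0) e_vert.
by rewrite e_vert eqxx in e_half.
Qed.

Lemma half_edge_lift y : r' y != y -> exists e, [/\ q e = y, r e != e & f (l e) != 0].
Proof.
move=> y_half; have [e qe] := contr_surj y; exists e; rewrite -qe in y_half *.
have e_half : r e != e by apply: contra y_half => /eqP e_vert; rewrite contr_r e_vert.
split=> //; apply: contra y_half => /eqP fe0; rewrite contr_r.
by apply/eqP/(q_contracted_edge e_half fe0); rewrite !inE eqxx ?orbT.
Qed.

Lemma contr_r_idem y : r' (r' y) = r' y.
Proof. by have [x <-] := contr_surj y; rewrite !contr_r r_idem. Qed.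

Lemma contr_iK : involutive i'.
Proof. by move=> y; have [x <-] := contr_surj y; rewrite !contr_i iK. Qed.

Lemma contr_l_i y : l' (i' y) = l' y.
Proof. by have [x <-] := contr_surj y; rewrite contr_i !contr_l l_i. Qed.

Lemma contr_half_edge_i y : (r' (i' y) != i' y) = (r' y != y).
Proof.
have half_i z : r' z != z -> r' (i' z) != i' z.
  case/half_edge_lift=> e [<- e_half fe_neq0]; rewrite contr_i.
  by apply: q_half_edge; rewrite ?half_edge_i ?l_i.
by apply/idP/idP => [/half_i|/half_i //]; rewrite contr_iK.
Qed.

Lemma contr_l_torsion_free y : r' y != y -> torsion_free (l' y).
Proof.
case/half_edge_lift=> e [<- _ fe_neq0]; rewrite contr_l.
apply: sharp_torsion_free hN _ fe_neq0; case: hf => _ _; apply.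
by case: hGamma.
Qed.

Lemma contr_vertex_exists : exists v, r' v = v.
Proof.
by have [v v_vert] := metrised_vertex_exists hGamma; exists (q v); rewrite contr_r v_vert.
Qed.

Definition q_sec (y : X') : X :=
  proj1_sig (constructive_indefinite_description _ (contr_surj y)).

Lemma q_secK : cancel q_sec q.
Proof. by move=> y; rewrite /q_sec; case: constructive_indefinite_description. Qed.

Definition push (D : X -> int) (y : X') : int := \sum_(x | q x == y) D x.

Lemma deg_push D : deg (push D) = deg D.
Proof. by rewrite /deg /push [RHS](partition_big q xpredT). Qed.

Lemma pushB D E y : push (fun x => D x - E x) y = push D y - push E y.
Proof. exact: sumrB. Qed.

Lemma divisor_push D : is_divisor r D -> is_divisor r' (push D).
Proof.
move=> D_div y y_half; apply: big1 => x /eqP qx; apply: D_div.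
by apply: contra y_half => /eqP x_vert; rewrite -qx contr_r x_vert.
Qed.

Lemma effective_push D : effective D -> effective (push D).
Proof. by move=> D_eff y; apply: sumr_ge0 => x _; apply: D_eff. Qed.

(* [F y] is placed at the vertex [r (q_sec y)] of [X], which lies over [r' y]. *)
Definition lift (F : X' -> int) (x : X) : int := \sum_(y | r (q_sec y) == x) F y.

Lemma deg_lift F : deg (lift F) = deg F.
Proof. by rewrite /deg /lift [RHS](partition_big (r \o q_sec) xpredT). Qed.

Lemma divisor_lift F : is_divisor r (lift F).
Proof.
move=> x x_half; apply: big_pred0 => y; apply: contraNF x_half => /eqP <-.
by rewrite r_idem.
Qed.

Lemma effective_lift F : effective F -> effective (lift F).
Proof. by move=> F_eff x; apply: sumr_ge0 => y _; apply: F_eff. Qed.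

Lemma push_lift F : is_divisor r' F -> push (lift F) =1 F.
Proof.
move=> F_div y0; rewrite /push /lift.
transitivity (\sum_(x | q x == y0) \sum_(y | (r' y == y0) && (r (q_sec y) == x)) F y).
  apply: eq_bigr => x /eqP qx; apply: eq_bigl => y.
  case: (r (q_sec y) =P x) => [rx|]; rewrite ?andbF ?andbT //.
  by rewrite -qx -rx -contr_r q_secK eqxx.
rewrite -(partition_big (fun y => r (q_sec y)) (fun x => q x == y0)) => [|y /eqP <-];
  last by rewrite -contr_r q_secK.
rewrite big_mkcond (bigD1 y0) //= big1 ?addr0 => [|y y_ne]; last first.
  by case: eqP => [ry|//]; apply: F_div; rewrite ry eq_sym.
by case: eqP => // /eqP /F_div ->.
Qed.

Definition push_PL (g : X -> G) (y : X') : H := gp_f (g (r (q_sec y))).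

Section PushPL.
Variable g : X -> G.
Hypothesis g_PL : is_PL r i l g.

Lemma gp_ext_slope e : r e != e ->
  gp_f (g (r e)) - gp_f (g (r (i e))) = f (l e) *~ slope r i l g e.
Proof.
move=> e_half; rewrite -(gp_extB hM hf) (slopeP l_torsion_free g_PL e_half).
by rewrite (gp_ext_mulrz hM hf); case: hGamma.
Qed.

Lemma gp_ext_PL_connect x z : connect contracted x z -> gp_f (g (r x)) = gp_f (g (r z)).
Proof.
have step u w : contracted u w -> gp_f (g (r u)) = gp_f (g (r w)).
  case/existsP=> e /and4P [e_half /eqP fe0 u_e w_e].
  have ie_e : gp_f (g (r (i e))) = gp_f (g (r e)).
    by apply/eqP; rewrite eq_sym -subr_eq0 gp_ext_slope // fe0 mul0rz.
  have end_e v : v \in [:: e; r e; i e; r (i e)] -> gp_f (g (r v)) = gp_f (g (r e)).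
    by rewrite !inE => /or4P [] /eqP ->; rewrite ?r_idem.
  by rewrite (end_e u u_e) (end_e w w_e).
move/connectP=> [p]; elim: p x => [|w p IHp] x /=; first by move=> _ ->.
by case/andP=> xw wp z_last; rewrite (step _ _ xw) (IHp w wp z_last).
Qed.

Lemma push_PL_q x : push_PL g (q x) = gp_f (g (r x)).
Proof. by apply: gp_ext_PL_connect; apply/contr_eq; rewrite q_secK. Qed.

Lemma push_PL_slope e : r e != e ->
  push_PL g (r' (q e)) - push_PL g (r' (i' (q e))) = l' (q e) *~ slope r i l g e.
Proof. by move=> e_half; rewrite contr_i !contr_r !push_PL_q !r_idem contr_l gp_ext_slope. Qed.

Lemma push_PL_is_PL : is_PL r' i' l' (push_PL g).
Proof.
move=> y /half_edge_lift [e [<- e_half _]].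
by exists (slope r i l g e); apply: push_PL_slope.
Qed.

Lemma slope_push_PL e : r e != e -> f (l e) != 0 ->
  slope r' i' l' (push_PL g) (q e) = slope r i l g e.
Proof.
move=> e_half fe_neq0; rewrite /slope push_PL_slope // mquot_mulrz //.
exact: contr_l_torsion_free (q_half_edge e_half fe_neq0).
Qed.

Lemma push_laplacian_edges y :
  push (laplacian r i l g) y = \sum_(e | (r e != e) && (q (r e) == y)) slope r i l g e.
Proof.
rewrite [RHS](partition_big r (fun x => q x == y)) /= => [|e /andP[_ //]].
apply: eq_bigr => x qx; rewrite /laplacian.
case: ifP => [x_vert | /negbT x_half].
  apply: eq_big => e; first by case: (r e =P x) => [->|]; rewrite ?qx ?andbT ?andbF.
  by case/andP=> _ /eqP <-.
rewrite big_pred0 // => e; case: (r e =P x) => [rx|]; rewrite ?andbF //.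
by move: x_half; rewrite -rx r_idem eqxx.
Qed.

Lemma sum_slope_contracted y :
  \sum_(e | (r e != e) && (q (r e) == y) && (f (l e) == 0)) slope r i l g e = 0.
Proof.
apply: sum_involution_anti iK _ _ => e /andP[/andP[e_half /eqP qe] /eqP fe0].
  rewrite half_edge_i e_half l_i fe0 eqxx andbT /= -qe; apply/eqP.
  by apply: (q_contracted_edge e_half fe0); rewrite !inE eqxx ?orbT.
exact: (slope_i iK l_i l_torsion_free g_PL).
Qed.

Lemma sum_slope_uncontracted y :
  \sum_(e | (r e != e) && (q (r e) == y) && (f (l e) != 0)) slope r i l g e =
  \sum_(e' | (r' e' != e') && (r' e' == y)) slope r' i' l' (push_PL g) e'.
Proof.
rewrite (partition_big q (fun e' => (r' e' != e') && (r' e' == y))) /= => [|e]; last first.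
  by case/andP=> /andP[e_half qe] fe_neq0; rewrite q_half_edge // contr_r qe.
apply: eq_bigr => e' /andP[e'_half /eqP ry].
have [e [qe e_half fe_neq0]] := half_edge_lift e'_half.
rewrite (eq_bigl (pred1 e)) ?big_pred1_eq -?qe ?slope_push_PL // => e0 /=.
apply/idP/eqP => [/andP[_ /eqP qe0] | ->].
  by apply: (connect_contracted_uncontracted e_half fe_neq0); apply/contr_eq; rewrite qe qe0.
by rewrite e_half fe_neq0 -contr_r qe ry !eqxx.
Qed.

Lemma push_laplacian : push (laplacian r i l g) =1 laplacian r' i' l' (push_PL g).
Proof.
move=> y; rewrite push_laplacian_edges /laplacian.
case: ifP => [_ | /negbT y_half]; last first.
  apply: big_pred0 => e; apply: contraNF y_half => /andP[_ /eqP <-].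
  by rewrite contr_r r_idem.
rewrite (bigID (fun e => f (l e) == 0)) /= sum_slope_contracted add0r.
by rewrite sum_slope_uncontracted; apply: eq_bigr => e' /andP[_ /eqP <-].
Qed.

End PushPL.

Lemma lin_equiv_push D E : lin_equiv r i l D E -> lin_equiv r' i' l' (push D) (push E).
Proof.
case=> g [g_PL DE]; exists (push_PL g); split; first exact: push_PL_is_PL.
by move=> y; rewrite -push_laplacian // -pushB; apply: eq_bigr => x _; rewrite DE.
Qed.

Lemma rank_set_push D k : rank_set r i l D k -> rank_set r' i' l' (push D) k.
Proof.
move=> D_rank F F_div F_eff F_deg.
have [|E [E_div E_eff /lin_equiv_push [g' [g'_PL EF]]]] :=
  D_rank (lift F) (divisor_lift F) (effective_lift F_eff); first by rewrite deg_lift.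
exists (push E); split; [exact: divisor_push | exact: effective_push | exists g'].
by split=> // y; rewrite -EF pushB (push_lift F_div).
Qed.

Lemma push_dgon_le D : is_divisor r D -> rank_ge1 r i l D ->
  exists n', is_dgon r' i' l' n' /\ n' <= deg D.
Proof.
move=> D_div [k [[D_rank _] k_ge1]]; have [v' v'_vert] := contr_vertex_exists.
rewrite -deg_push; apply: (is_dgon_le contr_r_idem contr_iK contr_half_edge_i contr_l_i
  contr_l_torsion_free v'_vert); first exact: divisor_push.
exact: (rank_ge1_of_rank_set contr_r_idem contr_iK contr_half_edge_i contr_l_i
  contr_l_torsion_free v'_vert (rank_set_push D_rank)).
Qed.

End Contraction.

Theorem corollary4p6
  (G H : zmodType) (M : G -> Prop) (N : H -> Prop)
  (hM : sharp_integral_monoid M) (hN : sharp_integral_monoid N)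
  (X : finType) (r i : X -> X) (l : X -> G)
  (hGamma : is_metrised_graph r i M l)
  (f : G -> H) (hf : monoid_hom M N f)
  (X' : finType) (r' i' : X' -> X') (l' : X' -> H) (q : X -> X')
  (hcontr : is_edge_contraction r i l f r' i' l' q) :
  forall n : int, is_dgon r i l n ->
    exists n' : int, is_dgon r' i' l' n' /\ n' <= n.
Proof.
move=> n [[D [D_div D_rank <-]] _].
exact: (push_dgon_le hM hN hGamma hf hcontr D_div D_rank).
Qed.
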